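(* Let $r,d$ be positive integers with $n=(r+1)d\geq 3$. Then $\Delta_d^t\left(C_{(r+1)d}^r\right)\simeq\mathbb{S}^{r-1}$.
   Context: All graphs are finite and simple; $\alpha(G)$ is the independence number and $G[S]$ the induced subgraph on $S$. $\Delta_d^t(G)=\{\sigma\subseteq V(G):\ \alpha(G[V(G)\setminus\sigma])\geq d\}$. $C_n$ is the cycle on $\{1,\dots,n\}$ with edges $\{i,i+1\}$ and $\{1,n\}$; $C_n^r$ is the graph on the same vertices where distinct vertices are adjacent iff their distance in $C_n$ is at most $r$. *)

From HB Require Import structures.
From mathcomp Require Import all_boot all_order all_algebra.
From mathcomp Require Import all_classical all_reals all_analysis.
Set Implicit Arguments. Unset Strict Implicit. Unset Printing Implicit Defensive.
Import Order.TTheory GRing.Theory Num.Theory.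
Import numFieldNormedType.Exports.

(* vertices 1..n of the paper are encoded as 0..n-1 *)

Definition cycdist (n : nat) (i j : 'I_n) : nat :=
  minn `|i - j|%N (n - `|i - j|%N).

Definition cyc_pow_adj (n r : nat) (i j : 'I_n) : bool :=
  (i != j) && (cycdist i j <= r).

Definition independent (T : finType) (adj : rel T) (I : {set T}) : bool :=
  [forall x in I, forall y in I, ~~ adj x y].

Definition alpha_induced (T : finType) (adj : rel T) (S : {set T}) : nat :=
  \max_(I : {set T} | (I \subset S) && independent adj I) #|I|.

Definition Delta_t (T : finType) (adj : rel T) (d : nat) (sigma : {set T}) : bool :=
  d <= alpha_induced adj (~: sigma).

Local Open Scope ring_scope.
Local Open Scope classical_set_scope.

Definition supp (R : realType) (n : nat) (x : 'rV[R]_n) : {set 'I_n} :=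
  [set i | x ord0 i != 0].

Definition geom_real (R : realType) (n : nat) (K : pred {set 'I_n}) : set 'rV[R]_n :=
  [set x : 'rV[R]_n | (forall i, 0 <= x ord0 i) /\ \sum_i x ord0 i = 1 /\ K (supp x)].

(* the unit sphere S^(m-1) in R^m *)
Definition sphere (R : realType) (m : nat) : set 'rV[R]_m :=
  [set y : 'rV[R]_m | \sum_i (y ord0 i) ^+ 2 = 1].

Definition homotopic_on (R : realType) (X Y : topologicalType)
  (A : set X) (B : set Y) (f g : X -> Y) : Prop :=
  exists H : R * X -> Y,
    {within [set p : R * X | 0 <= p.1 <= 1 /\ A p.2], continuous H} /\
    (forall t x, 0 <= t <= 1 -> A x -> B (H (t, x))) /\
    (forall x, A x -> H (0, x) = f x) /\
    (forall x, A x -> H (1, x) = g x).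

Definition homotopy_equiv (R : realType) (X Y : topologicalType)
  (A : set X) (B : set Y) : Prop :=
  exists (f : X -> Y) (g : Y -> X),
    {within A, continuous f} /\ {within B, continuous g} /\
    f @` A `<=` B /\ g @` B `<=` A /\
    homotopic_on R A A (g \o f) id /\ homotopic_on R B B (f \o g) id.

(* Every independent set of size d in C_{(r+1)d}^r is a residue class mod r+1,
   so the faces of Delta_d^t are exactly the sets missing one of the r+1
   residue classes.  Summing the coordinates of a point over each class thus
   maps the geometric realization onto the boundary of the r-simplex, which is
   homeomorphic to S^{r-1}.  Spreading each class mass evenly over its class is
   a homotopy inverse: composed the other way it gives the class-averaging map,
   joined to the identity by a straight-line homotopy that keeps missing the
   same residue class. *)

From HB Require Import structures.
From mathcomp Require Import all_boot all_order all_algebra.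
From mathcomp Require Import all_classical all_reals all_analysis.
From mathcomp Require Import zify ring.
Import numFieldNormedType.Exports.
Set Implicit Arguments. Unset Strict Implicit. Unset Printing Implicit Defensive.
Import Order.TTheory GRing.Theory Num.Theory.

Ltac case_ifs := repeat match goal with
  | H : context[if _ then _ else _] |- _ => move: H
  | |- context[if ?b then _ else _] =>
      lazymatch b with context[if _ then _ else _] => fail | _ => case: (boolP b) => ? end
  end.

Lemma cycdistE n (i j : 'I_n) :
  cycdist i j = minn (if (i:nat) <= j then j - i else i - j)
                     (n - (if (i:nat) <= j then j - i else i - j)).
Proof. by rewrite /cycdist; case: leqP => [/distnEr|/ltnW/distnEl] ->. Qed.

(* [cycfwd n s i] is the number of steps from [s] forward to [i] around C_n,
   and [cycadd n i k] is [(i + k) mod n] for [i < n] and [k <= n]; both are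
   written with case splits so that [lia] can reason about them. *)
Definition cycfwd (n s i : nat) : nat := if s <= i then i - s else i + n - s.

Definition cycadd (n i k : nat) : nat := if i + k < n then i + k else i + k - n.

Section Windows.
Variables n r : nat.

Lemma indep_window_le1 (I : {set 'I_n}) (s : 'I_n) :
  independent (@cyc_pow_adj n r) I -> #|[set i in I | cycfwd n s i <= r]| <= 1.
Proof.
move=> indI; apply/card_le1P => a; rewrite inE => /andP[aI fa] b; rewrite !inE.
apply/idP/eqP => [/andP[bI fb]| ->]; last by rewrite aI fa.
apply/val_inj/eqP; apply/negPn/negP => nab.
move: indI => /forallP/(_ a)/implyP/(_ aI)/forallP/(_ b)/implyP/(_ bI).
have nab' : a != b by apply: contra nab => /eqP ->.
rewrite /cyc_pow_adj nab' /= cycdistE -ltnNge.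
have := ltn_ord a; have := ltn_ord b; have := ltn_ord s; move: nab fa fb.
by rewrite /cycfwd; case_ifs; lia.
Qed.

Lemma card_windows_at (i : 'I_n) : r < n ->
  #|[set s : 'I_n | cycfwd n s i <= r]| = r.+1.
Proof.
move=> rn.
have back_lt (t : 'I_r.+1) : cycfwd n t i < n.
  by have := ltn_ord i; have := ltn_ord t; rewrite /cycfwd; case_ifs; lia.
pose back (t : 'I_r.+1) : 'I_n := Ordinal (back_lt t).
have -> : [set s : 'I_n | cycfwd n s i <= r] = back @: (finset.setT : {set 'I_r.+1}).
  apply/setP => s; rewrite inE; apply/idP/imsetP => [fs|[t _ ->]].
  - exists (Ordinal (fs : cycfwd n s i < r.+1)); first exact: finset.in_setT.
    apply: val_inj => /=.
    by have := ltn_ord i; have := ltn_ord s; move: fs; rewrite /cycfwd; case_ifs; lia.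
  - by rewrite /= /cycfwd; have := ltn_ord i; have := ltn_ord t; case_ifs; lia.
rewrite card_imset ?cardsT ?card_ord // => t1 t2 /(congr1 val) /= e12.
apply: val_inj; have := ltn_ord i; have := ltn_ord t1; have := ltn_ord t2.
by move: e12; rewrite /= /cycfwd; case_ifs; lia.
Qed.

End Windows.

Lemma bigmax_ge_witness (I : finType) (P : pred I) (F : I -> nat) m :
  0 < m -> m <= \max_(i | P i) F i -> exists2 i, P i & m <= F i.
Proof.
move=> m0; apply: (big_ind (fun x => m <= x -> exists2 i, P i & m <= F i)).
- by rewrite leqNgt m0.
- by move=> x y hx hy; rewrite leq_max => /orP[/hx|/hy].
- by move=> i Pi mi; exists i.
Qed.

Section PowerCycle.
Variables r d : nat.
Local Notation n := (r.+1 * d)%N.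
Local Notation adj := (@cyc_pow_adj n r).

Lemma r_lt_n (i : 'I_n) : r < n.
Proof.
have /(leq_ltn_trans (leq0n i)) := ltn_ord i; rewrite muln_gt0 => /andP[_ d0].
by have := leq_pmulr r d0; rewrite mulSn; lia.
Qed.

(* Each of the n windows of r+1 consecutive vertices holds at most one point
   of [I], while each point of [I] lies in r+1 windows: with [#|I| >= d] the
   n = (r+1) d windows are all hit. *)
Lemma indep_meets_window (I : {set 'I_n}) :
  independent adj I -> d <= #|I| ->
  forall s : 'I_n, exists2 i, i \in I & cycfwd n s i <= r.
Proof.
move=> indI dI s0; have rn := r_lt_n s0.
have incidences : \sum_(s : 'I_n) #|[set i in I | cycfwd n s i <= r]| = #|I| * r.+1.
  have card_sum (s : 'I_n) :
      #|[set i in I | cycfwd n s i <= r]| = \sum_(i in I) (cycfwd n s i <= r).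
    rewrite -sum1_card big_mkcond [RHS]big_mkcond; apply: eq_bigr => i _.
    by rewrite !inE; case: (i \in I); case: leqP.
  rewrite (eq_bigr _ (fun s _ => card_sum s)) exchange_big -sum1_card big_distrl.
  apply: eq_bigr => i _; rewrite /= mul1n; apply: eq_trans (card_windows_at i rn).
  by rewrite -sum1_card [RHS]big_mkcond; apply: eq_bigr => s _; rewrite inE; case: leqP.
case: (posnP #|[set i in I | cycfwd n s0 i <= r]|) => [miss|]; last first.
  by case/card_gt0P => i; rewrite inE => /andP[]; exists i.
have : \sum_(s : 'I_n) #|[set i in I | cycfwd n s i <= r]| <= n.-1.
  rewrite (bigD1 s0) //= miss add0n.
  apply: (@leq_trans (\sum_(s : 'I_n | s != s0) 1)).
    by apply: leq_sum => s _; exact: indep_window_le1.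
  by rewrite sum1_card cardC1 card_ord.
rewrite incidences; move: (dI); rewrite -(leq_pmul2r (ltn0Sn r)); lia.
Qed.

(* The window just after [i] meets [I]; independence leaves only [i + r + 1]. *)
Lemma indep_step (I : {set 'I_n}) (i : 'I_n) :
  independent adj I -> d <= #|I| -> i \in I ->
  exists2 j : 'I_n, j \in I & (j : nat) = cycadd n i r.+1.
Proof.
move=> indI dI iI; have rn := r_lt_n i.
have succ_lt : cycadd n i 1 < n by have := ltn_ord i; rewrite /cycadd; case_ifs; lia.
have [j jI fj] := indep_meets_window indI dI (Ordinal succ_lt).
exists j => //; apply/eqP; apply/negPn/negP => nj.
move: indI => /forallP/(_ i)/implyP/(_ iI)/forallP/(_ j)/implyP/(_ jI).
rewrite /cyc_pow_adj cycdistE negb_and negbK -ltnNge.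
have := ltn_ord i; have := ltn_ord j; move: nj fj; rewrite /cycadd /cycfwd /=.
case: (eqVneq i j) => [->|/eqP ij] /=; first by case_ifs; lia.
have ij' : (i : nat) <> j by move=> e; apply: ij; exact: val_inj.
by case_ifs; lia.
Qed.

Lemma indep_closed (I : {set 'I_n}) :
  independent adj I -> d <= #|I| ->
  forall m (i j : 'I_n), i \in I -> cycfwd n i j = m * r.+1 -> j \in I.
Proof.
move=> indI dI; elim=> [|m IH] i j iI.
  rewrite mul0n => fij; suff -> : j = i by [].
  apply: ord_inj; move: fij; have := ltn_ord i; have := ltn_ord j.
  by rewrite /cycfwd; case_ifs; lia.
have [i' i'I fi'] := indep_step indI dI iI.
move=> fij; apply: (IH i') => //; move: fij fi'; rewrite [m.+1 * _]mulSn.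
have := ltn_ord i; have := ltn_ord j; have := ltn_ord i'; have := r_lt_n i.
by rewrite /cycfwd /cycadd; move: (m * r.+1) => K; case_ifs; lia.
Qed.

Definition residue (i : 'I_n) : 'I_r.+1 := Ordinal (ltn_pmod i (ltn0Sn r)).

Definition residue_class (k : 'I_r.+1) : {set 'I_n} := [set i | residue i == k].

Lemma residue_class_sub_indep (I : {set 'I_n}) : 0 < d ->
  independent adj I -> d <= #|I| -> exists k, residue_class k \subset I.
Proof.
move=> d0 indI dI.
have /card_gt0P [i iI] : 0 < #|I| by exact: leq_trans d0 dI.
exists (residue i); apply/fintype.subsetP => j; rewrite inE => /eqP/(congr1 val) /= eij.
have dvd_fwd : r.+1 %| cycfwd n i j.
  rewrite /cycfwd; case: leqP => ij; first by rewrite -eqn_mod_dvd // eij.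
  rewrite -eqn_mod_dvd; last by have := ltn_ord i; lia.
  by rewrite -modnDmr modnMr addn0 eij.
by apply: (indep_closed indI dI (m := cycfwd n i j %/ r.+1) iI); rewrite divnK.
Qed.

Lemma card_residue_class (k : 'I_r.+1) : #|residue_class k| = d.
Proof.
have elt_lt (q : 'I_d) : q * r.+1 + k < n.
  by have := ltn_ord q; have := ltn_ord k; rewrite -[n]/(r.+1 * d)%N; nia.
pose elt (q : 'I_d) : 'I_n := Ordinal (elt_lt q).
have -> : residue_class k = elt @: (finset.setT : {set 'I_d}).
  apply/setP => i; rewrite inE; apply/eqP/imsetP => [ik|[q _ ->]].
  - have qlt : i %/ r.+1 < d.
      by rewrite ltn_divLR //; have := ltn_ord i; rewrite -[n]/(r.+1 * d)%N; nia.
    exists (Ordinal qlt); first exact: finset.in_setT.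
    by apply: val_inj => /=; rewrite {1}(divn_eq i r.+1) -ik.
  - by apply: val_inj => /=; rewrite modnMDl modn_small.
rewrite card_imset ?cardsT ?card_ord // => q1 q2 /(congr1 val) /= e12.
by apply: ord_inj; move/addIn/eqP: e12; rewrite eqn_pmul2r // => /eqP.
Qed.

Lemma residue_class_indep (k : 'I_r.+1) : independent adj (residue_class k).
Proof.
suff far (a b : 'I_n) : a < b -> residue a = residue b -> ~~ adj a b.
  apply/forallP => a; apply/implyP; rewrite inE => /eqP ak.
  apply/forallP => b; apply/implyP; rewrite inE => /eqP bk.
  case: (ltngtP a b) => [ab|ba|/ord_inj ->].
  - by apply: far ab _; rewrite ak bk.
  - by rewrite /cyc_pow_adj /cycdist distnC eq_sym; apply: far ba _; rewrite ak bk.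
  - by rewrite /cyc_pow_adj eqxx.
move=> ab /(congr1 val) /= eab; apply/nandP; right.
rewrite cycdistE (ltnW ab) -ltnNge.
have dvd_ab : r.+1 %| b - a by rewrite -eqn_mod_dvd ?eab // ltnW.
have dvd_co : r.+1 %| n - (b - a) by rewrite dvdn_sub // dvdn_mulr.
have := dvdn_leq _ dvd_ab; have := dvdn_leq _ dvd_co; have := ltn_ord b.
lia.
Qed.

Lemma Delta_t_cyc_powP (s : {set 'I_n}) : 0 < d ->
  reflect (exists k, [disjoint residue_class k & s]) (Delta_t adj d s).
Proof.
move=> d0; apply: (iffP idP) => [|[k disj]].
  rewrite /Delta_t /alpha_induced => /(bigmax_ge_witness d0) [I /andP[Is indI] dI].
  have [k kI] := residue_class_sub_indep d0 indI dI.
  by exists k; rewrite finset.disjoints_subset (fintype.subset_trans kI Is).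
rewrite /Delta_t /alpha_induced -{1}(card_residue_class k).
by apply: leq_bigmax_cond; rewrite residue_class_indep -finset.disjoints_subset disj.
Qed.

End PowerCycle.

Section Continuity.
Variable R : realType.
Local Open Scope ring_scope.
Local Open Scope classical_set_scope.

Lemma continuous_sum_at (T : topologicalType) (V : normedModType R) (I : Type)
    (s : seq I) (P : pred I) (g : I -> T -> V) (x : T) :
  (forall i, P i -> {for x, continuous (g i)}) ->
  {for x, continuous (fun y => \sum_(i <- s | P i) g i y)}.
Proof. by move=> gx; apply: cvg_big => //; exact: add_continuous. Qed.

Lemma continuous_bigmin (T : topologicalType) (I : Type) (s : seq I) (P : pred I)
    (g : I -> T -> R) :
  (forall i, P i -> continuous (g i)) ->
  continuous (fun x => \big[Num.min/0]_(i <- s | P i) g i x).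
Proof. by apply: continuous_big; exact: min_continuous. Qed.

Lemma continuous_row_at (T : topologicalType) m (g : 'I_m -> T -> R) (x : T) :
  (forall j, {for x, continuous (g j)}) -> {for x, continuous (fun y => \row_j g j y)}.
Proof.
move=> gx; have -> : (fun y => \row_j g j y) = (fun y => \sum_j g j y *: delta_mx ord0 j).
  by apply: funext => y; rewrite [LHS]row_sum_delta; under eq_bigr do rewrite mxE.
by apply: continuous_sum_at => j _; exact: continuousZr_tmp.
Qed.

Lemma homotopic_on_eq (X Y : topologicalType) (A : set X) (B : set Y) (f f' g : X -> Y) :
  (forall x, A x -> f x = f' x) -> homotopic_on R A B f g -> homotopic_on R A B f' g.
Proof.
move=> ff' [H [Hc [HB [H0 H1]]]]; exists H; split; [|split; [|split]] => //.
by move=> x Ax; rewrite H0 // ff'.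
Qed.

Lemma homotopic_on_refl (X Y : topologicalType) (A : set X) (B : set Y) (f : X -> Y) :
  continuous f -> f @` A `<=` B -> homotopic_on R A B f f.
Proof.
move=> fc fAB; exists (f \o snd); split; [|split; [|split]] => //.
- by apply: continuous_subspaceT => p; apply: continuous_comp; [exact: cvg_snd|exact: fc].
- by move=> t x _ Ax; apply: fAB; exists x.
Qed.

Lemma homotopic_on_segment (V : normedModType R) (A B : set V) (f g : V -> V) :
  continuous f -> continuous g ->
  (forall t x, 0 <= t <= 1 -> A x -> B ((1 - t) *: f x + t *: g x)) ->
  homotopic_on R A B f g.
Proof.
move=> fc gc segAB; exists (fun p => (1 - p.1) *: f p.2 + p.1 *: g p.2).
split; [|split; [|split]] => //.
- apply: continuous_subspaceT => p.
  apply: (continuousD (f := fun p : R * V => (1 - p.1) *: f p.2)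
                      (g := fun p : R * V => p.1 *: g p.2)).
  + apply: (continuousZ (s := fun p : R * V => 1 - p.1) (f := f \o snd)).
      apply: (continuousB (f := fun _ : R * V => (1 : R)) (g := fun p : R * V => p.1)).
        exact: cvg_cst.
      exact: cvg_fst.
    by apply: continuous_comp; [exact: cvg_snd|exact: fc].
  + apply: (continuousZ (s := fst) (f := g \o snd)); first exact: cvg_fst.
    by apply: continuous_comp; [exact: cvg_snd|exact: gc].
- by move=> x _ /=; rewrite subr0 scale1r scale0r addr0.
- by move=> x _ /=; rewrite subrr scale0r add0r scale1r.
Qed.

End Continuity.

Section Normalization.
Variables (R : realType) (p : nat).
Local Open Scope ring_scope.
Implicit Types (y z : 'rV[R]_p).

Definition l1normalize y : 'rV[R]_p := (\sum_k y ord0 k)^-1 *: y.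

Definition l2norm z : R := Num.sqrt (\sum_j z ord0 j ^+ 2).

Definition l2normalize z : 'rV[R]_p := (l2norm z)^-1 *: z.

Lemma l1normalizeZ c y : 0 < c -> \sum_k y ord0 k = 1 -> l1normalize (c *: y) = y.
Proof.
move=> c0 y1; rewrite /l1normalize.
under eq_bigr do rewrite mxE.
by rewrite -mulr_sumr y1 mulr1 scalerA mulVf ?scale1r // gt_eqF.
Qed.

Lemma sum_l1normalize y : \sum_k y ord0 k != 0 -> \sum_k l1normalize y ord0 k = 1.
Proof. by move=> y0; under eq_bigr do rewrite mxE; rewrite -mulr_sumr mulVf. Qed.

Lemma l2norm_gt0 z : z != 0 -> 0 < l2norm z.
Proof.
move=> z0; rewrite sqrtr_gt0 lt0r sumr_ge0 ?andbT => [|j _]; last exact: sqr_ge0.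
apply: contra z0 => /eqP/psumr_eq0P z0; apply/eqP/rowP => j.
by have /eqP := z0 (fun j _ => sqr_ge0 _) j isT; rewrite sqrf_eq0 mxE => /eqP.
Qed.

Lemma sphere_l2normalize z : z != 0 -> sphere (l2normalize z).
Proof.
move=> z0; have e0 := l2norm_gt0 z0; rewrite /sphere /= /l2normalize.
under eq_bigr do rewrite mxE exprMn.
rewrite -mulr_sumr -[X in _ * X]sqr_sqrtr ?sumr_ge0 // => [|j _]; last exact: sqr_ge0.
by rewrite -/(l2norm z) -exprMn mulVf ?expr1n // gt_eqF.
Qed.

Lemma l2normalizeZ c z : 0 < c -> sphere z -> l2normalize (c *: z) = z.
Proof.
move=> c0 z1; rewrite /l2normalize /l2norm.
under eq_bigr do rewrite mxE exprMn.
rewrite -mulr_sumr z1 mulr1 sqrtr_sqr gtr0_norm // scalerA mulVf ?scale1r //.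
by rewrite gt_eqF.
Qed.

Lemma continuous_l2norm : continuous l2norm.
Proof.
move=> z; apply: continuous_comp; last exact: sqrt_continuous.
apply: continuous_sum_at => j _.
by apply: continuousM; exact: coord_continuous.
Qed.

Lemma continuous_l1normalize_at y : \sum_k y ord0 k != 0 -> {for y, continuous l1normalize}.
Proof.
move=> y0; rewrite /l1normalize.
apply: (continuousZ (s := fun y => (\sum_k y ord0 k)^-1) (f := id)) => //.
apply: continuousV => //.
by apply: continuous_sum_at => k _; exact: coord_continuous.
Qed.

Lemma continuous_l2normalize_at z : z != 0 -> {for z, continuous l2normalize}.
Proof.
move=> z0; rewrite /l2normalize.
apply: (continuousZ (s := fun z => (l2norm z)^-1) (f := id)) => //.
apply: continuousV; first by rewrite gt_eqF // l2norm_gt0.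
exact: continuous_l2norm.
Qed.

End Normalization.

Section SimplexBoundary.
Variables (R : realType) (m : nat).
Local Open Scope ring_scope.

Definition simplex_boundary : set 'rV[R]_m.+1 :=
  geom_real (fun s : {set 'I_m.+1} => s != finset.setT).

Lemma simplex_boundaryP (y : 'rV[R]_m.+1) :
  simplex_boundary y <->
  [/\ forall k, 0 <= y ord0 k, \sum_k y ord0 k = 1 & exists k, y ord0 k = 0].
Proof.
have proper : (supp y != finset.setT) <-> exists k, y ord0 k = 0.
  rewrite -finset.properT; split => [/fintype.properP [_ [k _]]|[k yk]].
    by rewrite inE negbK => /eqP; exists k.
  apply/fintype.properP; split; first exact: finset.subsetT.
  by exists k; rewrite ?finset.in_setT // inE yk eqxx.
by split => [[y0 [y1 /proper]]|[y0 y1 /proper]].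
Qed.

Definition ext0 (u : 'rV[R]_m) : 'rV[R]_m.+1 :=
  \row_k if unlift ord_max k is Some j then u ord0 j else 0.

Definition rel_last (y : 'rV[R]_m.+1) : 'rV[R]_m :=
  \row_j (y ord0 (lift ord_max j) - y ord0 ord_max).

Lemma ext0_max u : ext0 u ord0 ord_max = 0.
Proof. by rewrite mxE unlift_none. Qed.

Lemma ext0_lift u j : ext0 u ord0 (lift ord_max j) = u ord0 j.
Proof. by rewrite mxE liftK. Qed.

Lemma ext0_rel_last y k : ext0 (rel_last y) ord0 k = y ord0 k - y ord0 ord_max.
Proof.
case: (unliftP ord_max k) => [j ->|->]; first by rewrite ext0_lift mxE.
by rewrite ext0_max subrr.
Qed.

(* The least entry of [ext0 u]; the neutral element 0 is its last entry. *)
Definition min0 (u : 'rV[R]_m) : R := \big[Num.min/0]_j u ord0 j.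

Lemma min0_le u k : min0 u <= ext0 u ord0 k.
Proof.
case: (unliftP ord_max k) => [j ->|->]; rewrite ?ext0_lift ?ext0_max.
  by rewrite /min0 (bigD1 j) //= ge_min lexx.
by rewrite /min0; elim/big_rec: _ => // j x _ x0; rewrite ge_min x0 orbT.
Qed.

Lemma min0_attained u : exists k, ext0 u ord0 k = min0 u.
Proof.
rewrite /min0; apply: (big_ind (fun x => exists k, ext0 u ord0 k = x)).
- by exists ord_max; rewrite ext0_max.
- by move=> x x' [k <-] [k' <-]; rewrite minEle; case: ifP; [exists k|exists k'].
- by move=> j _; exists (lift ord_max j); rewrite ext0_lift.
Qed.

Lemma min0_eq u c : (forall k, c <= ext0 u ord0 k) -> (exists k, ext0 u ord0 k = c) ->
  min0 u = c.
Proof.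
move=> cle [k ekc]; rewrite -ekc in cle *; apply/le_anti; rewrite min0_le /= /min0.
apply: (big_ind (fun x => ext0 u ord0 k <= x)) => [|x x' kx kx'|j _].
- by have := cle ord_max; rewrite ext0_max.
- by rewrite le_min kx kx'.
- by have := cle (lift ord_max j); rewrite ext0_lift.
Qed.

Definition shift_min (u : 'rV[R]_m) : 'rV[R]_m.+1 := \row_k (ext0 u ord0 k - min0 u).

Definition to_simplex (u : 'rV[R]_m) : 'rV[R]_m.+1 := l1normalize (shift_min u).

Definition of_simplex (y : 'rV[R]_m.+1) : 'rV[R]_m := l2normalize (rel_last y).

Lemma shift_minE u k : shift_min u ord0 k = ext0 u ord0 k - min0 u.
Proof. by rewrite mxE. Qed.

Lemma shift_min_ge0 u k : 0 <= shift_min u ord0 k.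
Proof. by rewrite shift_minE subr_ge0 min0_le. Qed.

Lemma sum_shift_min_gt0 u : sphere u -> 0 < \sum_k shift_min u ord0 k.
Proof.
move=> u1; rewrite lt0r sumr_ge0 ?andbT => [|k _]; last exact: shift_min_ge0.
apply/negP => /eqP/psumr_eq0P shift0.
have {}shift0 := shift0 (fun k _ => shift_min_ge0 u k).
have ext0_min k : ext0 u ord0 k = min0 u.
  by have /eqP := shift0 k isT; rewrite mxE subr_eq0 => /eqP.
have u0 j : u ord0 j = 0 by rewrite -ext0_lift ext0_min -(ext0_min ord_max) ext0_max.
move: u1; rewrite /sphere /= big1 => [/eqP|j _]; first by rewrite eq_sym oner_eq0.
by rewrite u0 expr0n.
Qed.

Lemma to_simplex_boundary u : sphere u -> simplex_boundary (to_simplex u).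
Proof.
move=> u1; have S0 := sum_shift_min_gt0 u1; apply/simplex_boundaryP; split.
- by move=> k; rewrite mxE mulr_ge0 ?invr_ge0 ?shift_min_ge0 ?ltW.
- by apply: sum_l1normalize; rewrite gt_eqF.
- have [k ek] := min0_attained u.
  by exists k; rewrite mxE shift_minE ek subrr mulr0.
Qed.

Lemma to_simplexK u : sphere u -> of_simplex (to_simplex u) = u.
Proof.
move=> u1; have S0 := sum_shift_min_gt0 u1.
set S := \sum_k _ in S0; rewrite /of_simplex.
have -> : rel_last (to_simplex u) = S^-1 *: u.
  apply/rowP => j; rewrite [LHS]mxE ![to_simplex _ _ _]mxE !shift_minE.
  by rewrite ext0_lift ext0_max mxE; ring.
by apply: l2normalizeZ; rewrite ?invr_gt0.
Qed.

Lemma rel_last_neq0 y : simplex_boundary y -> rel_last y != 0.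
Proof.
case/simplex_boundaryP=> _ y1 [k0 yk0]; apply/eqP => rel0.
have y_last k : y ord0 k = y ord0 ord_max.
  case: (unliftP ord_max k) => [j ->|->] //; apply/eqP; rewrite -subr_eq0.
  by have /rowP/(_ j) := rel0; rewrite !mxE => ->.
move: y1; rewrite big1 => [/eqP|k _]; first by rewrite eq_sym oner_eq0.
by rewrite y_last -(y_last k0).
Qed.

Lemma of_simplex_sphere y : simplex_boundary y -> sphere (of_simplex y).
Proof. by move=> /rel_last_neq0; exact: sphere_l2normalize. Qed.

Lemma of_simplexK y : simplex_boundary y -> to_simplex (of_simplex y) = y.
Proof.
move=> yb; have e0 := l2norm_gt0 (rel_last_neq0 yb).
case/simplex_boundaryP: yb => y0 y1 [k0 yk0].
set e := l2norm (rel_last y) in e0.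
have ext0_of k : ext0 (of_simplex y) ord0 k = e^-1 * (y ord0 k - y ord0 ord_max).
  rewrite -ext0_rel_last; case: (unliftP ord_max k) => [j ->|->].
    by rewrite !ext0_lift mxE.
  by rewrite !ext0_max mulr0.
have min0_of : min0 (of_simplex y) = - (e^-1 * y ord0 ord_max).
  apply: min0_eq => [k|]; last by exists k0; rewrite ext0_of yk0 sub0r mulrN.
  rewrite ext0_of mulrBr -[X in X <= _]add0r lerD2r.
  by apply: mulr_ge0; [rewrite invr_ge0 ltW | exact: y0].
rewrite /to_simplex; have -> : shift_min (of_simplex y) = e^-1 *: y.
  by apply/rowP => k; rewrite shift_minE ext0_of min0_of mxE; ring.
by apply: l1normalizeZ; rewrite ?invr_gt0.
Qed.

Lemma continuous_ext0 : continuous ext0.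
Proof.
move=> u; apply: continuous_row_at => k; case: (unlift ord_max k) => [j|].
  exact: coord_continuous.
exact: cst_continuous.
Qed.

Lemma continuous_shift_min : continuous shift_min.
Proof.
move=> u; apply: continuous_row_at => k.
apply: (continuousB (f := fun v => ext0 v ord0 k) (g := min0)).
  apply: (continuous_comp (f := ext0) (g := fun y => y ord0 k)).
    exact: continuous_ext0.
  exact: coord_continuous.
by apply: continuous_bigmin => j _; exact: coord_continuous.
Qed.

Lemma continuous_rel_last : continuous rel_last.
Proof.
move=> y; apply: continuous_row_at => j.
by apply: (continuousB (f := fun y : 'rV[R]_m.+1 => y ord0 (lift ord_max j))
                       (g := fun y : 'rV[R]_m.+1 => y ord0 ord_max));
  exact: coord_continuous.
Qed.

Lemma to_simplex_continuous_at u : sphere u -> {for u, continuous to_simplex}.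
Proof.
move=> u1; apply: continuous_comp; first exact: continuous_shift_min.
by apply: continuous_l1normalize_at; rewrite gt_eqF ?sum_shift_min_gt0.
Qed.

Lemma of_simplex_continuous_at y : simplex_boundary y -> {for y, continuous of_simplex}.
Proof.
move=> yb; apply: continuous_comp; first exact: continuous_rel_last.
exact/continuous_l2normalize_at/rel_last_neq0.
Qed.

End SimplexBoundary.

Section ClassMasses.
Variables (R : realType) (r d : nat).
Hypothesis d_gt0 : (0 < d)%N.
Local Open Scope ring_scope.
Local Notation n := (r.+1 * d)%N.
Local Notation complex := (geom_real (Delta_t (@cyc_pow_adj n r) d)).

Lemma complexP (x : 'rV[R]_n) :
  complex x <-> [/\ forall i, 0 <= x ord0 i, \sum_i x ord0 i = 1 &
                  exists k, forall i, residue i = k -> x ord0 i = 0].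
Proof.
have faceP : Delta_t (@cyc_pow_adj n r) d (supp x) <->
             exists k, forall i, residue i = k -> x ord0 i = 0.
  split => [/(Delta_t_cyc_powP _ d_gt0) [k disj]|[k xk]].
    exists k => i ik; have ik' : i \in residue_class d k by rewrite inE ik.
    by have := disjointFr disj ik'; rewrite inE => /negbT; rewrite negbK => /eqP.
  apply/(Delta_t_cyc_powP _ d_gt0); exists k.
  rewrite finset.disjoints_subset; apply/fintype.subsetP => i.
  by rewrite !inE => /eqP/xk ->; rewrite eqxx.
by split => [[x0 [x1 /faceP]]|[x0 x1 /faceP]].
Qed.

Definition class_mass (x : 'rV[R]_n) : 'rV[R]_r.+1 :=
  \row_k \sum_(i in residue_class d k) x ord0 i.

Definition spread (y : 'rV[R]_r.+1) : 'rV[R]_n := \row_i (y ord0 (residue i) / d%:R).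

Lemma sum_class_mass x : \sum_k class_mass x ord0 k = \sum_i x ord0 i.
Proof.
rewrite (partition_big (@residue r d) predT) //=.
by apply: eq_bigr => k _; rewrite mxE; apply: eq_bigl => i; rewrite inE.
Qed.

Lemma class_mass_spread y : class_mass (spread y) = y.
Proof.
apply/rowP => k; rewrite mxE (eq_bigr (fun=> y ord0 k / d%:R)); last first.
  by move=> i; rewrite inE mxE => /eqP ->.
rewrite sumr_const card_residue_class -[_ *+ d]mulr_natr divfK //.
by rewrite pnatr_eq0 -lt0n.
Qed.

Lemma class_mass_boundary x : complex x -> simplex_boundary (class_mass x).
Proof.
case/complexP => x0 x1 [k xk]; apply/simplex_boundaryP; split.
- by move=> k'; rewrite mxE sumr_ge0.
- by rewrite sum_class_mass.
- by exists k; rewrite mxE big1 // => i; rewrite inE => /eqP/xk.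
Qed.

Lemma spread_complex y : simplex_boundary y -> complex (spread y).
Proof.
case/simplex_boundaryP => y0 y1 [k yk]; apply/complexP; split.
- by move=> i; rewrite mxE divr_ge0.
- by rewrite -sum_class_mass class_mass_spread.
- by exists k => i ik; rewrite mxE ik yk mul0r.
Qed.

Lemma segment_complex t x : 0 <= t <= 1 -> complex x ->
  complex ((1 - t) *: spread (class_mass x) + t *: x).
Proof.
move=> /andP[t0 t1] /[dup] /class_mass_boundary /spread_complex /complexP [z0 z1 _].
case/complexP => x0 x1 [k xk].
have zk i : residue i = k -> spread (class_mass x) ord0 i = 0.
  by move=> ik; rewrite mxE ik mxE big1 ?mul0r // => j; rewrite inE => /eqP/xk.
move: (spread _) z0 z1 zk => z z0 z1 zk; apply/complexP; split.
- by move=> i; rewrite !mxE addr_ge0 ?mulr_ge0 ?subr_ge0.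
- under eq_bigr do rewrite !mxE.
  by rewrite big_split /= -!mulr_sumr z1 x1; ring.
- by exists k => i ik; rewrite !mxE xk ?zk // !mulr0 addr0.
Qed.

Lemma continuous_class_mass : continuous class_mass.
Proof.
move=> x; apply: continuous_row_at => k.
by apply: continuous_sum_at => i _; exact: coord_continuous.
Qed.

Lemma continuous_spread : continuous spread.
Proof.
move=> y; apply: continuous_row_at => i.
apply: (continuousM (s := fun y : 'rV[R]_r.+1 => y ord0 (residue i))
                    (t := fun=> d%:R^-1)); first exact: coord_continuous.
exact: cst_continuous.
Qed.

End ClassMasses.

Theorem mainTheorem11 (R : realType) (r d : nat) :
  0 < r -> 0 < d -> 3 <= (r.+1 * d)%N ->
  homotopy_equiv R
    (@geom_real R _ (Delta_t (@cyc_pow_adj (r.+1 * d) r) d))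
    (@sphere R r).
Proof.
move=> _ d0 _.
exists (@of_simplex R r \o @class_mass R r d), (@spread R r d \o @to_simplex R r).
split; [|split; [|split; [|split; [|split]]]].
- apply: continuous_in_subspaceT => x /set_mem xK.
  apply: continuous_comp; first exact: continuous_class_mass.
  exact/of_simplex_continuous_at/class_mass_boundary.
- apply: continuous_in_subspaceT => u /set_mem u1.
  apply: continuous_comp; first exact: to_simplex_continuous_at.
  exact: continuous_spread.
- by move=> _ [x xK <-]; exact/of_simplex_sphere/class_mass_boundary.
- by move=> _ [u u1 <-]; exact/spread_complex/to_simplex_boundary.
- apply: (homotopic_on_eq (f := @spread R r d \o @class_mass R r d)).
    by move=> x xK /=; rewrite of_simplexK //; exact: class_mass_boundary.
  apply: homotopic_on_segment; last exact: (segment_complex d0).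
    move=> x; apply: continuous_comp; first exact: continuous_class_mass.
    exact: continuous_spread.
  by move=> x; exact: cvg_id.
- apply: (homotopic_on_eq (f := id)).
    by move=> u u1 /=; rewrite class_mass_spread // to_simplexK.
  by apply: homotopic_on_refl => [x|_ [u u1 <-]] //; exact: cvg_id.
Qed.
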